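(* Let $\mathcal I$ be a chore allocation instance with two agents $N=\{1,2\}$, labelled so that $s_1\le s_2$, and let $\langle X_1,X_2\rangle$ be the output of Algorithm $\mathsf{DivCho}$ on $\mathcal I$. Then for each $i\in\{1,2\}$, $V_i(X_i)\ge\frac32\mathsf{WMMS}_i(\mathcal I)\ge\frac32\mathsf{OWMMS}_i(\mathcal I)$.
   Context: A chore allocation instance: agents $N$, chores $M$, additive valuations $V_i$ with $V_i(\{j\})\le0$ and $V_i(M)=-1$, shares $s_i\in(0,1]$ with $\sum_is_i=1$. An allocation is an ordered partition of $M$ into $|N|$ possibly empty bundles. $\mathsf{WMMS}_i(\mathcal I):=\max_{\langle Y_1,\dots,Y_n\rangle}\min_{k\in N}V_i(Y_k)\frac{s_i}{s_k}$ over all allocations; a partition attaining this maximum is a P-$i$ partition. The OWMMS ratio $\alpha^*$ is the minimal $\alpha\ge1$ such that some allocation has $V_i(X_i)\ge\alpha\,\mathsf{WMMS}_i(\mathcal I)$ for all $i$, and $\mathsf{OWMMS}_i(\mathcal I):=\alpha^*\mathsf{WMMS}_i(\mathcal I)$. Algorithm $\mathsf{DivCho}$ (with $s_1\le s_2$): if $s_1\le\frac13$ and $s_2\ge\frac23$, output $X_1=\emptyset$, $X_2=M$. Otherwise, agent 2 partitions $M$ into $\langle A_1,A_2\rangle$ according to a P-2 partition; agent 1 chooses the bundle among $A_1,A_2$ of highest value $V_1$, which becomes $X_1$, and the other bundle becomes $X_2$. *)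

From mathcomp Require Import all_boot all_order all_algebra.
Set Implicit Arguments. Unset Strict Implicit. Unset Printing Implicit Defensive.
Import Order.TTheory GRing.Theory Num.Theory.
Local Open Scope ring_scope.

(* An allocation of chores M to agents 'I_n is an ordered partition of M into
   n (possibly empty) bundles, represented by X : {ffun M -> 'I_n}
   (chore j goes to agent X j). *)
Definition bundle (M : finType) (n : nat) (X : {ffun M -> 'I_n}) (k : 'I_n)
  : {set M} := [set j | X j == k].

Definition valS (R : realFieldType) (M : finType) (u : M -> R) (S : {set M}) : R :=
  \sum_(j in S) u j.

Definition is_instance (R : realFieldType) (M : finType) (n : nat)
  (v : 'I_n -> M -> R) (s : 'I_n -> R) : Prop :=
  [/\ (forall i j, v i j <= 0),
      (forall i, valS (v i) [set: M] = -1),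
      (forall i, 0 < s i /\ s i <= 1) &
      \sum_(i < n) s i = 1].

(* min_k V_i(Y_k) * s_i / s_k  (the seed is the k = i term, so this is the min
   over all k : 'I_n). *)
Definition wmin (R : realFieldType) (M : finType) (n : nat)
  (v : 'I_n -> M -> R) (s : 'I_n -> R) (i : 'I_n) (Y : {ffun M -> 'I_n}) : R :=
  \big[Num.min/ valS (v i) (bundle Y i) * (s i / s i)]_(k < n)
     (valS (v i) (bundle Y k) * (s i / s k)).

Definition WMMS (R : realFieldType) (M : finType) (n : nat)
  (v : 'I_n -> M -> R) (s : 'I_n -> R) (i : 'I_n) : R :=
  \big[Num.max/ wmin v s i [ffun => i]]_(Y : {ffun M -> 'I_n}) wmin v s i Y.

Definition P_partition (R : realFieldType) (M : finType) (n : nat)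
  (v : 'I_n -> M -> R) (s : 'I_n -> R) (i : 'I_n) (Y : {ffun M -> 'I_n}) : Prop :=
  wmin v s i Y = WMMS v s i.

Definition alpha_feasible (R : realFieldType) (M : finType) (n : nat)
  (v : 'I_n -> M -> R) (s : 'I_n -> R) (alpha : R) : Prop :=
  exists X : {ffun M -> 'I_n},
    forall i, alpha * WMMS v s i <= valS (v i) (bundle X i).

Definition is_OWMMS_ratio (R : realFieldType) (M : finType) (n : nat)
  (v : 'I_n -> M -> R) (s : 'I_n -> R) (alpha : R) : Prop :=
  [/\ 1 <= alpha, alpha_feasible v s alpha &
      forall beta, 1 <= beta -> alpha_feasible v s beta -> alpha <= beta].

Definition OWMMS (R : realFieldType) (M : finType) (n : nat)
  (v : 'I_n -> M -> R) (s : 'I_n -> R) (alpha : R) (i : 'I_n) : R :=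
  alpha * WMMS v s i.

Definition agent1 : 'I_2 := ord0.
Definition agent2 : 'I_2 := ord_max.

(* X is a possible output of DivCho (any P-2 partition, any tie-breaking). *)
Definition DivCho_output (R : realFieldType) (M : finType)
  (v : 'I_2 -> M -> R) (s : 'I_2 -> R) (X : {ffun M -> 'I_2}) : Prop :=
  if (s agent1 <= 1/3) && (2/3 <= s agent2) then X = [ffun => agent2]
  else exists A : {ffun M -> 'I_2},
    P_partition v s agent2 A /\
    exists c : 'I_2,
      (forall d : 'I_2, valS (v agent1) (bundle A d) <= valS (v agent1) (bundle A c)) /\
      X = [ffun j => if A j == c then agent1 else agent2].

(* Since the shares sum to 1, the minimum defining [wmin] is at most the
   share-weighted average of the terms [V_i(Y_k) s_i / s_k], which is
   [s_i V_i(M) = -s_i]; hence WMMS_i <= -s_i <= 0, and OWMMS_i <= WMMS_i because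
   alpha^* >= 1.  If DivCho gives everything to agent 2, then s_2 >= 2/3 and
   V_2(M) = -1 >= 3/2 (-s_2).  Otherwise s_1 > 1/3; agent 1 picks the better of
   two bundles, worth at least -1/2 > 3/2 (-s_1), and agent 2, who has the
   largest share, receives a bundle of her own P-2 partition, which is worth
   at least WMMS_2 since its weight s_2/s_k is at least 1. *)
From mathcomp Require Import all_boot all_order all_algebra.
From mathcomp Require Import lra.
Set Implicit Arguments. Unset Strict Implicit. Unset Printing Implicit Defensive.
Import Order.TTheory GRing.Theory Num.Theory.
Local Open Scope ring_scope.

Section Shares.

Variables (R : realFieldType) (M : finType) (n : nat).
Implicit Types (u : M -> R) (Y : {ffun M -> 'I_n}).

Lemma valS_le0 u S : (forall j, u j <= 0) -> valS u S <= 0.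
Proof. by move=> u_le0; apply: sumr_le0 => j _. Qed.

Lemma sum_valS_bundle u Y : \sum_(k < n) valS u (bundle Y k) = valS u [set: M].
Proof.
rewrite /valS (partition_big Y predT) //=.
by apply: eq_bigr => k _; apply: eq_bigl => j; rewrite !inE.
Qed.

Lemma valS_le_mul_max_bundle u Y c :
  (forall d, valS u (bundle Y d) <= valS u (bundle Y c)) ->
  valS u [set: M] <= n%:R * valS u (bundle Y c).
Proof.
move=> c_max; rewrite -(sum_valS_bundle u Y).
apply: le_trans (ler_sum _ (fun d _ => c_max d)) _.
by rewrite sumr_const card_ord mulr_natl.
Qed.

Variables (v : 'I_n -> M -> R) (s : 'I_n -> R).

Lemma wmin_le_bundle i Y k :
  wmin v s i Y <= valS (v i) (bundle Y k) * (s i / s k).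
Proof. exact: bigmin_le. Qed.

Lemma wmin_le_neg_share i Y : is_instance v s -> wmin v s i Y <= - s i.
Proof.
case=> _ vM s_pos s_sum; set m := wmin v s i Y.
have m_share k : m * s k <= valS (v i) (bundle Y k) * s i.
  have [sk_gt0 _] := s_pos k.
  by rewrite -ler_pdivlMr // -mulrA; apply: wmin_le_bundle.
have := ler_sum (index_enum 'I_n) (fun k (_ : true) => m_share k).
by rewrite -mulr_sumr -mulr_suml s_sum sum_valS_bundle vM mulr1 mulN1r.
Qed.

Lemma WMMS_le_neg_share i : is_instance v s -> WMMS v s i <= - s i.
Proof.
move=> inst; apply: bigmax_le => [|Y _]; exact: wmin_le_neg_share.
Qed.

Lemma WMMS_le0 i : is_instance v s -> WMMS v s i <= 0.
Proof.
move=> inst; have [_ _ s_pos _] := inst; have [si_gt0 _] := s_pos i.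
by apply: le_trans (WMMS_le_neg_share i inst) _; rewrite oppr_le0 ltW.
Qed.

Lemma OWMMS_le_WMMS alpha i :
  is_instance v s -> is_OWMMS_ratio v s alpha -> OWMMS v s alpha i <= WMMS v s i.
Proof. by move=> inst [alpha_ge1 _ _]; apply: ler_neMl => //; apply: WMMS_le0. Qed.

Lemma WMMS_le_P_partition_bundle i Y k :
  is_instance v s -> s k <= s i -> P_partition v s i Y ->
  WMMS v s i <= valS (v i) (bundle Y k).
Proof.
case=> v_le0 _ s_pos _ ski P_Y; rewrite -P_Y.
apply: le_trans (wmin_le_bundle i Y k) _; apply: ler_neMr; first exact: valS_le0.
by have [sk_gt0 _] := s_pos k; rewrite ler_pdivlMr // mul1r.
Qed.

End Shares.

Lemma agent_cases (k : 'I_2) : k = agent1 \/ k = agent2.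
Proof. case: k => [[|[|//]] ?]; [left | right]; exact: val_inj. Qed.

Section DivCho.

Variables (R : realFieldType) (M : finType) (v : 'I_2 -> M -> R) (s : 'I_2 -> R).
Hypothesis inst : is_instance v s.
Hypothesis s12 : s agent1 <= s agent2.

Lemma share_sum2 : s agent1 + s agent2 = 1.
Proof.
have [_ _ _ <-] := inst; rewrite big_ord_recl big_ord1.
by congr (_ + s _); apply: val_inj.
Qed.

Lemma DivCho_give_all i :
  2/3 <= s agent2 ->
  3/2 * WMMS v s i <= valS (v i) (bundle [ffun => agent2] i).
Proof.
move=> s2_big; have [_ vM _ _] := inst.
case: (agent_cases i) => ->.
  have -> : bundle [ffun => agent2] agent1 = set0 :> {set M}.
    by apply/setP => j; rewrite !inE ffunE.
  by rewrite /valS big_set0; have := WMMS_le0 agent1 inst; lra.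
have -> : bundle [ffun => agent2] agent2 = [set: M].
  by apply/setP => j; rewrite !inE ffunE eqxx.
by rewrite vM; have := WMMS_le_neg_share agent2 inst; lra.
Qed.

Lemma DivCho_cut_choose i (A : {ffun M -> 'I_2}) c :
  1/3 < s agent1 -> P_partition v s agent2 A ->
  (forall d, valS (v agent1) (bundle A d) <= valS (v agent1) (bundle A c)) ->
  3/2 * WMMS v s i <=
    valS (v i) (bundle [ffun j => if A j == c then agent1 else agent2] i).
Proof.
move=> s1_big P_A c_best; have [_ vM _ _] := inst.
case: (agent_cases i) => ->.
  have -> : bundle [ffun j => if A j == c then agent1 else agent2] agent1
            = bundle A c.
    by apply/setP => j; rewrite !inE ffunE; case: (A j == c).
  have := valS_le_mul_max_bundle c_best; rewrite vM.
  by have := WMMS_le_neg_share agent1 inst; lra.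
have [c' ->] : exists c', bundle [ffun j => if A j == c then agent1 else agent2]
                            agent2 = bundle A c'.
  by case: (agent_cases c) => ->; [exists agent2 | exists agent1];
    apply/setP => j; rewrite !inE ffunE; case: (agent_cases (A j)) => ->.
have s_c' : s c' <= s agent2 by case: (agent_cases c') => ->.
have := WMMS_le_P_partition_bundle inst s_c' P_A.
by have := WMMS_le0 agent2 inst; lra.
Qed.

Lemma DivCho_guarantee X i :
  DivCho_output v s X -> 3/2 * WMMS v s i <= valS (v i) (bundle X i).
Proof.
rewrite /DivCho_output; case: ifP => [/andP[_ s2_big] -> | not_trivial].
  exact: DivCho_give_all.
have s1_big : 1/3 < s agent1.
  rewrite ltNge; apply/negP => s1_small.
  have s2_big : 2/3 <= s agent2 by have := share_sum2; lra.
  by rewrite s1_small s2_big in not_trivial.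
by case=> A [P_A [c [c_best ->]]]; exact: DivCho_cut_choose.
Qed.

End DivCho.

Theorem theorem2 (R : realFieldType) (M : finType)
  (v : 'I_2 -> M -> R) (s : 'I_2 -> R) (X : {ffun M -> 'I_2}) :
  is_instance v s ->
  s agent1 <= s agent2 ->
  DivCho_output v s X ->
  forall i : 'I_2,
    3/2 * WMMS v s i <= valS (v i) (bundle X i) /\
    (forall alpha, is_OWMMS_ratio v s alpha ->
       3/2 * OWMMS v s alpha i <= 3/2 * WMMS v s i).
Proof.
move=> inst s12 out i; split; first exact: DivCho_guarantee.
by move=> alpha ratio; apply: ler_wpM2l; [lra | exact: OWMMS_le_WMMS].
Qed.
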